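(* Let $r=2$ and $m=2n$. Let the utilities $u_i(j)$ ($i\in[n]$, $j\in[m]$) be drawn independently from a distribution $\mathcal{U}$ on $[0,1]$ that is $(\underline{\theta},q)$-polynomially bounded below at 1 and $(\overline{\theta},q)$-polynomially bounded above at 1, for constants $\underline{\theta},\overline{\theta},q>0$, and let $\tau:=1-\left(\frac{64\log m}{\underline{\theta}n}\right)^{1/q}$. Let $E_{\geq\tau}=\{(i,j): u_i(j)\geq\tau\}$ and let $E^*_{\geq\tau}$ be the edge set produced by ThresholdMatchingWithRemoval$_\tau$ (see context). Then, with high probability, the bipartite graph $(N,M,E_{\geq\tau}\setminus E^*_{\geq\tau})$ has maximum degree at most 2.
   Context: Agents are $N=[n]$, items $M=[m]$. A distribution $\mathcal{U}$ on $[0,1]$ is $(\theta,q)$-polynomially bounded below (resp. above) at 1 if for all $\alpha\in(0,1]$, $\Pr_{u\sim\mathcal{U}}[u>1-\alpha]\geq\theta\alpha^q$ (resp. $\leq\theta\alpha^q$). For a finite multiset $S$ of reals, sum-top$_r(S)$ is the sum of its $r$ largest elements (or of all elements if $|S|<r$). Procedure ThresholdMatchingWithRemoval$_\tau$: for each agent $i=1,\dots,n$, set $M^*_{\geq\tau}(i)\leftarrow\{j\in M: u_i(j)\geq\tau\}$; then for each $i'\in N\setminus\{i\}$ in turn, while sum-top$_r(\{u_{i'}(j): j\in M^*_{\geq\tau}(i)\})>r\tau$ (as a multiset), remove from $M^*_{\geq\tau}(i)$ the item(s) $j\in M^*_{\geq\tau}(i)$ maximizing $u_{i'}(j)$. Then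 $E^*_{\geq\tau}=\{(i,j): j\in M^*_{\geq\tau}(i)\text{ at the end}\}$. $\log$ is natural. ''With high probability'' means with probability tending to 1 as $n\to\infty$. *)

From HB Require Import structures.
From mathcomp Require Import all_boot all_order all_algebra.
From mathcomp Require Import all_classical all_reals all_analysis.
Set Implicit Arguments. Unset Strict Implicit. Unset Printing Implicit Defensive.
Import Order.TTheory GRing.Theory Num.Theory.
Local Open Scope classical_set_scope.
Local Open Scope ring_scope.

Definition poly_bounded_below (R : realType) (U : probability R R) (theta q : R) :=
  forall alpha : R, 0 < alpha <= 1 ->
    ((theta * alpha `^ q)%:E <= U [set u : R | (1 - alpha < u)%R])%E.

Definition poly_bounded_above (R : realType) (U : probability R R) (theta q : R) :=
  forall alpha : R, 0 < alpha <= 1 ->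
    (U [set u : R | (1 - alpha < u)%R] <= (theta * alpha `^ q)%:E)%E.

(* mutual independence of a finite family X of real random variables indexed
   by I : finType: product rule for every choice of measurable sets
   (taking B k = setT gives the product rule for every subfamily). *)
Definition mutually_independent d (Omega : measurableType d) (R : realType)
  (P : probability Omega R) (I : finType) (X : I -> {RV P >-> R}) :=
  forall B : I -> set R, (forall k, measurable (B k)) ->
    P (\bigcap_(k in [set: I]) (X k @^-1` B k)) =
    (\prod_(k : I) P (X k @^-1` B k))%E.

Definition sum_top (R : realType) (r : nat) (s : seq R) : R :=
  \sum_(x <- take r (sort (fun a b : R => b <= a) s)) x.

Section Procedure.
Variables (R : realType) (n m r : nat) (tau : R) (u : 'I_n -> 'I_m -> R).

Definition argmax_items (i' : 'I_n) (S : {set 'I_m}) : {set 'I_m} :=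
  finset (fun j => (j \in S) && [forall k in S, u i' k <= u i' j]).

Definition removal_step (i' : 'I_n) (S : {set 'I_m}) : {set 'I_m} :=
  if r%:R * tau < sum_top r [seq u i' j | j <- enum S]
  then S :\: argmax_items i' S else S.

(* the while loop; each effective iteration removes at least one item,
   so m iterations suffice to reach the fixed point *)
Definition removal_loop (i' : 'I_n) (S : {set 'I_m}) : {set 'I_m} :=
  iter m (removal_step i') S.

Definition Mstar (i : 'I_n) : {set 'I_m} :=
  foldl (fun S i' => removal_loop i' S)
        (finset (fun j : 'I_m => tau <= u i j))
        [seq i' <- enum 'I_n | i' != i].

Definition E_ge (i : 'I_n) (j : 'I_m) : bool := tau <= u i j.
Definition E_star (i : 'I_n) (j : 'I_m) : bool := j \in Mstar i.

Definition residual_max_degree_le (k : nat) : bool :=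
  [forall i : 'I_n, #|[pred j : 'I_m | E_ge i j && ~~ E_star i j]| <= k]%N &&
  [forall j : 'I_m, #|[pred i : 'I_n | E_ge i j && ~~ E_star i j]| <= k]%N.

End Procedure.

Definition tau_threshold (R : realType) (theta q : R) (n m : nat) : R :=
  1 - (64 * ln (m%:R : R) / (theta * n%:R)) `^ (q^-1).

(* Call (i, j) hot when u_i(j) > 2 tau - 1.  When agent a makes the procedure
   remove item j from M*(i), the two largest utilities of a on the remaining items
   sum to more than 2 tau; as utilities are at most 1, both exceed 2 tau - 1, so a
   also has a hot item y <> j still in M*(i), and i is hot on y as well: the edge
   (i, j) lies on a hot 4-cycle i j a y.  Three such 4-cycles at one agent (or, by
   symmetry, at one item) contain a hot copy of one of four small patterns with
   k agents, l items and k + l + 1 edges: K_{2,3}, K_{3,2}, a "fan" or a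
   "bowtie".  A cell is hot with probability at most theta_hi (2 (1 - tau))^q,
   which is of order (log n) / n, and there are O(n^(k + l)) placements of a
   pattern, so by a union bound no pattern is hot with probability
   1 - O(polylog(n) / n). *)

From HB Require Import structures.
From mathcomp Require Import all_boot all_order all_algebra.
From mathcomp Require Import all_classical all_reals all_analysis.
From mathcomp Require Import lra ring.
Import Order.TTheory GRing.Theory Num.Theory.
Set Implicit Arguments. Unset Strict Implicit. Unset Printing Implicit Defensive.

Definition complete_pat k l : 'I_k -> 'I_l -> bool := fun _ _ => true.
Arguments complete_pat : clear implicits.

Definition fan_pat : 'I_3 -> 'I_3 -> bool :=
  fun p q => [|| p == 0 :> nat, q == 0 :> nat | p == q :> nat].

Definition bowtie_pat : 'I_3 -> 'I_4 -> bool :=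
  fun p q => [|| p == 0 :> nat, (p == 1 :> nat) && (q < 2) | (p == 2 :> nat) && (2 <= q)].

Section Patterns.
Variables A B : finType.
Implicit Types h : A -> B -> bool.

Definition occurs k l (pat : 'I_k -> 'I_l -> bool) h :=
  [exists f : k.-tuple A, exists g : l.-tuple B,
    [&& uniq f, uniq g & [forall p, forall q, pat p q ==> h (tnth f p) (tnth g q)]]].

Lemma occursW k l (pat : 'I_k -> 'I_l -> bool) h (f : k.-tuple A) (g : l.-tuple B) :
  uniq f -> uniq g -> (forall p q, pat p q -> h (tnth f p) (tnth g q)) -> occurs pat h.
Proof.
move=> uf ug fg; apply/existsP; exists f; apply/existsP; exists g.
by rewrite uf ug; apply/forallP=> p; apply/forallP=> q; apply/implyP/fg.
Qed.

Definition dense_free h :=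
  [&& ~~ occurs (complete_pat 2 3) h, ~~ occurs (complete_pat 3 2) h,
      ~~ occurs fan_pat h & ~~ occurs bowtie_pat h].

Definition rectangle h i a j y := [&& a != i, y != j, h i j, h a j, h a y & h i y].

Lemma rectangleC h i a j y : rectangle h i a j y = rectangle h i a y j.
Proof.
by rewrite /rectangle (eq_sym j); case: (h i j); case: (h a j); case: (h a y); case: (h i y);
  rewrite ?andbF.
Qed.

Lemma rectangles_common h i a b j y y' : a != b ->
  rectangle h i a j y -> rectangle h i b j y' ->
  occurs (complete_pat 3 2) h || occurs fan_pat h.
Proof.
move=> ab /and3P[ai yj /and4P[hij haj hay hiy]] /and3P[bi y'j /and4P[_ hbj hby' hiy']].
have uiab : uniq [:: i; a; b] by rewrite /= !inE !negb_or eq_sym ai eq_sym bi ab.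
have [eyy'|yy'] := eqVneq y y'.
  rewrite -eyy' in hby'; apply/orP; left.
  apply: (occursW (f := [tuple i; a; b]) (g := [tuple j; y])) => //.
    by rewrite /= inE eq_sym yj.
  by do 2 case=> [[|[|[|//]]] ?].
apply/orP; right; apply: (occursW (f := [tuple i; a; b]) (g := [tuple j; y; y'])) => //.
  by rewrite /= !inE !negb_or eq_sym yj eq_sym y'j yy'.
by do 2 case=> [[|[|[|//]]] ?].
Qed.

Lemma rectangles_two_partners h i a b j y j' y' : a != b ->
  rectangle h i a j y -> rectangle h i b j' y' ->
  [|| occurs (complete_pat 3 2) h, occurs fan_pat h | occurs bowtie_pat h].
Proof.
move=> ab r1 r2; rewrite orbA.
have [j'jy|j'njy] := boolP (j' \in [:: j; y]).
  move: j'jy r2; rewrite !inE => /orP[]/eqP-> r2; first by rewrite (rectangles_common ab r1 r2).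
  by rewrite rectangleC in r1; rewrite (rectangles_common ab r1 r2).
have [y'jy|y'njy] := boolP (y' \in [:: j; y]).
  move: y'jy r2; rewrite rectangleC !inE => /orP[]/eqP-> r2.
    by rewrite (rectangles_common ab r1 r2).
  by rewrite rectangleC in r1; rewrite (rectangles_common ab r1 r2).
move: r1 r2 => /and3P[ai yj /and4P[hij haj hay hiy]] /and3P[bi y'j' /and4P[hij' hbj' hby' hiy']].
apply/orP; right; apply: (occursW (f := [tuple i; a; b]) (g := [tuple j; y; j'; y'])).
- by rewrite /= !inE !negb_or eq_sym ai eq_sym bi ab.
- move: j'njy y'njy; rewrite /= !inE !negb_or => /andP[j'j j'y] /andP[y'j y'y].
  by rewrite (eq_sym j y) (eq_sym j j') (eq_sym j y') (eq_sym y j') (eq_sym y y') (eq_sym j' y')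
    yj j'j y'j j'y y'y y'j'.
- by case=> [[|[|[|//]]] ?]; case=> [[|[|[|[|//]]]] ?].
Qed.

Lemma dense_free_rectangles_card h i (D : pred B) : dense_free h ->
  (forall j, D j -> exists a y, rectangle h i a j y) -> (#|D| <= 2)%N.
Proof.
case/and4P=> nK23 nK32 nfan nbowtie witness; rewrite leqNgt.
apply/card_gt2P => -[j1 [j2 [j3 [[D1 D2 D3] [j12 j23 j31]]]]].
have [a1 [y1 r1]] := witness _ D1.
have [a2 [y2 r2]] := witness _ D2.
have [a3 [y3 r3]] := witness _ D3.
have same_partner a b j y j' y' : rectangle h i a j y -> rectangle h i b j' y' -> a = b.
  move=> ra rb; apply/eqP; apply: contraT => ab.
  have := rectangles_two_partners ab ra rb.
  by rewrite (negbTE nK32) (negbTE nfan) (negbTE nbowtie).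
have e2 := same_partner _ _ _ _ _ _ r1 r2; have e3 := same_partner _ _ _ _ _ _ r1 r3.
subst a2 a3.
move: r1 r2 r3 => /and3P[ai _ /and3P[hij1 haj1 _]] /and3P[_ _ /and3P[hij2 haj2 _]]
  /and3P[_ _ /and3P[hij3 haj3 _]].
move/negP: nK23; apply; apply: (occursW (f := [tuple i; a1]) (g := [tuple j1; j2; j3])).
- by rewrite /= inE eq_sym ai.
- by rewrite /= !inE !negb_or j12 eq_sym j31 j23.
- by case=> [[|[|//]] ?]; case=> [[|[|[|//]]] ?].
Qed.

End Patterns.

Lemma occurs_transpose (A B : finType) k l (pat : 'I_k -> 'I_l -> bool) (h : A -> B -> bool) :
  occurs pat (fun j i => h i j) = occurs (fun q p => pat p q) h.
Proof.
apply/existsP/existsP => -[f /existsP[g /and3P[uf ug fg]]]; exists g; apply/existsP; exists f;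
  rewrite ug uf /=; apply/forallP => p; apply/forallP => q; exact: (forallP (forallP fg q) p).
Qed.

Lemma rectangle_transpose (A B : finType) (h : A -> B -> bool) i a j y :
  rectangle (fun j i => h i j) j y i a = rectangle h i a j y.
Proof.
by rewrite /rectangle; case: (a != i); case: (y != j); case: (h i j); case: (h a j);
  case: (h a y); case: (h i y); rewrite ?andbF.
Qed.

Local Open Scope ring_scope.

Lemma sum_top2_gt (R : realType) (T : eqType) (s : seq T) (f : T -> R) (c : R) :
  uniq s -> (forall x, f x <= 1) -> 1 <= c -> c < sum_top 2 [seq f x | x <- s] ->
  exists x1 x2, [/\ x1 != x2, x1 \in s, x2 \in s & c < f x1 + f x2].
Proof.
move=> us f_le1 c_ge1; rewrite /sum_top sort_map -map_take big_map.
have : uniq (sort (relpre f (fun a b : R => b <= a)) s) by rewrite sort_uniq.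
have : {subset sort (relpre f (fun a b : R => b <= a)) s <= s} by move=> x; rewrite mem_sort.
case: (sort _ _) => [|x1 [|x2 s']] sub_s /=; rewrite ?big_nil ?big_cons ?big_nil.
- by move=> _; rewrite ltNge (le_trans ler01 c_ge1).
- by move=> _; rewrite addr0 ltNge (le_trans (f_le1 x1) c_ge1).
- rewrite take0 big_nil addr0 inE negb_or => /andP[/andP[x12 _] _] c_lt.
  by exists x1, x2; rewrite !sub_s ?inE ?eqxx ?orbT.
Qed.

Section Removal.
Variables (R : realType) (n m : nat) (tau : R) (u : 'I_n -> 'I_m -> R).
Hypotheses (u_le1 : forall i j, u i j <= 1) (tau_ge_half : 1 <= 2 * tau) (tau_lt1 : tau < 1).

Local Notation above := (fun i j => 2 * tau - 1 < u i j).

Definition removal_invariant i (S : {set 'I_m}) :=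
  S \subset [set j | tau <= u i j] /\
  forall j, tau <= u i j -> j \notin S -> exists a y, rectangle above i a j y.

Lemma removal_step_invariant i a S : a != i -> removal_invariant i S ->
  removal_invariant i (removal_step 2 tau u a S).
Proof.
move=> ai [subS witness]; rewrite /removal_step; case: ifP => // sum_gt; split.
  exact: fintype.subset_trans (subsetDl _ _) subS.
move=> j uj; rewrite finset.in_setD negb_and negbK => /orP[|jS]; last exact: witness.
rewrite finset.in_set => /andP[jS /forall_inP j_max].
have [j1 [j2 [j12 j1S j2S sum12]]] :=
  sum_top2_gt (enum_uniq (mem S)) (u_le1 a) tau_ge_half sum_gt.
rewrite !mem_enum in j1S j2S.
have above_ge x y : tau <= u x y -> above x y by move=> ?; have := tau_lt1; lra.
have above_a1 : above a j1 by have := u_le1 a j2; lra.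
have above_a2 : above a j2 by have := u_le1 a j1; lra.
have [y [yj yS ay]] : exists y, [/\ y != j, y \in S & above a y].
  by have [<-|j1j] := eqVneq j1 j; [exists j2; rewrite eq_sym | exists j1].
exists a, y; rewrite /rectangle ai yj ay above_ge //=.
have -> : above a j by apply: lt_le_trans above_a1 (j_max _ j1S).
by apply: above_ge; move/fintype.subsetP: subS => /(_ y yS); rewrite finset.in_set.
Qed.

Lemma residual_rectangle i j : E_ge tau u i j -> ~~ E_star 2 tau u i j ->
  exists a y, rectangle above i a j y.
Proof.
move=> uij; suff [_ witness] : removal_invariant i (Mstar 2 tau u i) by exact: witness.
rewrite /Mstar; have : all (fun a => a != i) [seq a <- enum 'I_n | a != i] by exact: filter_all.
have : removal_invariant i [set j | tau <= u i j].
  by split=> // j' uj'; rewrite finset.in_set uj'.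
elim: [seq a <- _ | _] [set j | _] => //= a s IH S inv_S /andP[ai s_i].
apply: IH s_i; rewrite /removal_loop.
have iter_inv k : removal_invariant i (iter k (removal_step 2 tau u a) S).
  by elim: k => //= k; exact: removal_step_invariant.
exact: iter_inv.
Qed.

End Removal.

Lemma residual_max_degree_le2 (R : realType) n m tau (u : 'I_n -> 'I_m -> R) :
  (forall i j, u i j <= 1) -> 1 <= 2 * tau -> tau < 1 ->
  dense_free (fun i j => 2 * tau - 1 < u i j) -> dense_free (fun j i => 2 * tau - 1 < u i j) ->
  residual_max_degree_le 2 tau u 2.
Proof.
move=> u_le1 tau_ge_half tau_lt1 free_rows free_cols.
apply/andP; split; apply/forallP.
  move=> i; apply: (dense_free_rectangles_card (i := i) free_rows) => j /andP[uij nstar].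
  exact (residual_rectangle u_le1 tau_ge_half tau_lt1 uij nstar).
move=> j; apply: (dense_free_rectangles_card (i := j) free_cols) => i /andP[uij nstar].
have [a [y r]] := residual_rectangle u_le1 tau_ge_half tau_lt1 uij nstar.
by exists y, a; rewrite rectangle_transpose.
Qed.

Local Open Scope classical_set_scope.

Section Unlikely.
Variables (d : measure_display) (Omega : measurableType d) (R : realType).
Variable P : probability Omega R.

Definition unlikely (E : pred Omega) (e : R) :=
  measurable [set w | E w] /\ (P [set w | E w] <= e%:E)%E.

Lemma unlikely_le E e e' : e <= e' -> unlikely E e -> unlikely E e'.
Proof. by move=> ee' [mE PE]; split=> //; apply: le_trans PE _; rewrite lee_fin. Qed.

Lemma unlikely_eq E1 E2 e : E1 =1 E2 -> unlikely E1 e -> unlikely E2 e.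
Proof. by move=> /boolp.funext ->. Qed.

Lemma unlikely_orb E1 E2 e1 e2 : unlikely E1 e1 -> unlikely E2 e2 ->
  unlikely (fun w => E1 w || E2 w) (e1 + e2).
Proof.
move=> [m1 P1] [m2 P2]; rewrite /unlikely.
have -> : [set w | E1 w || E2 w] = [set w | E1 w] `|` [set w | E2 w].
  by apply/seteqP; split=> w /= => [/orP|[]->]; rewrite ?orbT.
split; first exact: measurableU.
by apply: le_trans (measureU2 _ m1 m2) _; rewrite EFinD leeD.
Qed.

Lemma unlikely_exists (T : finType) (E : T -> pred Omega) e :
  (forall x, unlikely (E x) e) -> unlikely (fun w => [exists x, E x w]) (#|T|%:R * e).
Proof.
move=> Ee; have -> : (fun w => [exists x, E x w]) = (fun w => has (E^~ w) (enum T)).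
  by apply: boolp.funext => w; apply/existsP/hasP => [[x Ex]|[x _ Ex]]; exists x; rewrite ?mem_enum.
rewrite cardE; elim: (enum T) => [|x s IH] /=.
  rewrite mul0r /unlikely (_ : [set w | _] = set0) ?measure0 //.
  by apply/seteqP; split=> w.
by rewrite -add1n natrD mulrDl mul1r; apply: unlikely_orb.
Qed.

End Unlikely.

Section Independence.
Variables (d : measure_display) (Omega : measurableType d) (R : realType).
Variables (P : probability Omega R) (C : finType) (X : C -> {RV P >-> R}).
Hypothesis indep : mutually_independent X.
Variables t q0 : R.
Hypothesis tail : forall c, (P [set w | (t < X c w)%R] <= q0%:E)%E.

Lemma unlikely_forall_gt (S : {set C}) :
  unlikely P (fun w => [forall c in S, t < X c w]) (q0 ^+ #|S|).
Proof.
pose B c : set R := if c \in S then `]t, +oo[%classic else setT.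
have mB c : measurable (B c) by rewrite /B; case: ifP.
have mXB c : measurable (X c @^-1` B c) by exact: measurable_funPTI.
rewrite /unlikely.
have -> : [set w | [forall c in S, t < X c w]] = \bigcap_(c in [set: C]) X c @^-1` B c.
  apply/seteqP; split=> w /=.
    by move=> /forall_inP wS c _; rewrite /B; case: ifP => //= cS; rewrite in_itv /= andbT wS.
  by move=> wB; apply/forall_inP => c cS; have := wB c I; rewrite /B cS /= in_itv /= andbT.
split; first by apply: fin_bigcap_measurable => // c _; exact: finite_finset.
have PB c : P (X c @^-1` B c) = (fine (P (X c @^-1` B c)))%:E by rewrite fineK ?fin_num_measure.
rewrite indep // (eq_bigr _ (fun c _ => PB c)) prodEFin lee_fin -prodr_const [leRHS]big_mkcond /=.
apply: ler_prod => c _; rewrite fine_ge0 ?measure_ge0 //= -lee_fin -PB /B.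
case: ifP => cS; last by rewrite preimage_setT probability_setT.
have -> : X c @^-1` `]t, +oo[ = [set w | t < X c w].
  by apply/seteqP; split=> w /=; rewrite in_itv /= andbT.
exact: tail.
Qed.

End Independence.

Lemma unlikely_occurs d (Omega : measurableType d) (R : realType) (P : probability Omega R)
    (A B : finType) (X : A * B -> {RV P >-> R}) (t q0 : R) :
  mutually_independent X -> 0 <= q0 -> (forall c, (P [set w | (t < X c w)%R] <= q0%:E)%E) ->
  forall k l (pat : 'I_k -> 'I_l -> bool),
  unlikely P (fun w => occurs pat (fun i j => t < X (i, j) w))
    ((#|A| ^ k * #|B| ^ l)%:R * q0 ^+ #|[pred c : 'I_k * 'I_l | pat c.1 c.2]|).
Proof.
move=> indep q0_ge0 tail k l pat.
rewrite -!card_tuple natrM -mulrA; apply: unlikely_exists => f; apply: unlikely_exists => g.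
have [/andP[uf ug]|not_uniq] := boolP (uniq f && uniq g); last first.
  apply: (unlikely_le (exprn_ge0 _ q0_ge0)); rewrite /unlikely.
  rewrite (_ : [set w | _] = set0) ?measure0 //; apply/seteqP; split=> w //=.
  by case/and3P=> uf ug _; move: not_uniq; rewrite uf ug.
have cell_inj : injective (fun c : 'I_k * 'I_l => (tnth f c.1, tnth g c.2)).
  by move=> [p q] [p' q'] /= [/(tuple_uniqP _ uf) -> /(tuple_uniqP _ ug) ->].
rewrite -(card_imset _ cell_inj) uf ug /=.
set S := imset _ _.
have -> : (fun w => [forall p, forall q, pat p q ==> (t < X (tnth f p, tnth g q) w)%R]) =
    (fun w => [forall c in S, (t < X c w)%R]).
  apply: boolp.funext => w; apply/forallP/forall_inP => [wpat _ /imsetP[[p q] pq ->]|wS p].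
    exact: (implyP (forallP (wpat p) q)).
  by apply/forallP => q; apply/implyP => pq; apply: wS; apply/imsetP; exists (p, q).
exact: unlikely_forall_gt.
Qed.

Lemma card_rel k l (pat : 'I_k -> 'I_l -> bool) :
  #|[pred c : 'I_k * 'I_l | pat c.1 c.2]| = (\sum_(p < k) \sum_(q < l) pat p q)%N.
Proof. by rewrite -sum1_card big_mkcond pair_bigA. Qed.

Lemma log_pow_le_eventually (R : realType) (c eps : R) : 0 <= c -> 0 < eps ->
  exists N, forall n, (N <= n)%N -> (1 + c * ln ((2 * n)%:R : R)) ^+ 8 <= eps * n%:R.
Proof.
move=> c0 eps0; set C := 2 * (1 + 16 * c) ^+ 8 / eps.
have C0 : 0 <= C by rewrite /C divr_ge0 ?mulr_ge0 ?exprn_ge0 ?ltW //; lra.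
exists (Num.Def.truncn (C ^+ 2)).+1 => n nN.
have Cn : C ^+ 2 < n%:R by rewrite -truncn_lt_nat ?exprn_ge0.
set x : R := (2 * n)%:R.
have xn : x = 2 * n%:R by rewrite /x natrM.
have n1 : 1 <= n%:R :> R by rewrite ler1n; apply: leq_trans nN.
set s := x `^ 16^-1.
have s0 : 0 < s by apply: powR_gt0; lra.
have s16 : s ^+ 16 = x.
  by rewrite -powR_mulrn ?(ltW s0) // -powRrM mulVf ?powRr1 //; lra.
have s1 : 1 <= s by rewrite -(@expr_ge1 _ 16) ?s16 ?(ltW s0) //; lra.
have ln_x : ln x <= 16 * s by have := ln_sublinear s0; rewrite ln_powR; lra.
have ln_x0 : 0 <= ln x by apply: ln_ge0; lra.
set z := s ^+ 8.
have z0 : 0 <= z by rewrite exprn_ge0 // ltW.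
have z2 : z ^+ 2 = x by rewrite -exprM.
have Cz : C <= z by rewrite -ler_sqr ?nnegrE // z2; lra.
have base : 1 + c * ln x <= (1 + 16 * c) * s by nra.
have pow_base : (1 + c * ln x) ^+ 8 <= (1 + 16 * c) ^+ 8 * z.
  by rewrite /z -exprMn lerXn2r ?nnegrE //; nra.
apply: le_trans pow_base _.
have -> : (1 + 16 * c) ^+ 8 = C * eps / 2 by rewrite /C; field; lra.
have -> : n%:R = z ^+ 2 / 2 :> R by rewrite z2 xn; field.
have ez : 0 <= eps * z by rewrite mulr_ge0 // ltW.
nra.
Qed.

Lemma threshold_eventually (R : realType) (theta q K eps : R) :
  0 < theta -> 0 <= K -> 0 < eps ->
  exists N, forall n, (N <= n)%N ->
    [/\ (0 < n)%N, 64 * ln ((2 * n)%:R : R) / (theta * n%:R) <= 2 `^ (- q)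
      & 128 * (1 + K * ln ((2 * n)%:R : R)) ^+ 8 / n%:R <= eps].
Proof.
move=> theta0 K0 eps0; set p := 2 `^ (- q).
have p0 : 0 < p by apply: powR_gt0.
have [N1 small1] : exists N, forall n, (N <= n)%N ->
    (1 + 1 * ln ((2 * n)%:R : R)) ^+ 8 <= theta * p / 64 * n%:R.
  by apply: log_pow_le_eventually; rewrite ?ler01 ?divr_gt0 ?mulr_gt0.
have [N2 small2] : exists N, forall n, (N <= n)%N ->
    (1 + K * ln ((2 * n)%:R : R)) ^+ 8 <= eps / 128 * n%:R.
  by apply: log_pow_le_eventually; rewrite ?divr_gt0.
exists (maxn 1 (maxn N1 N2)) => n; rewrite !geq_max => /and3P[n0 nN1 nN2].
have nR : 0 < n%:R :> R by rewrite ltr0n.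
split=> //.
  set L := ln _; have L0 : 0 <= L by apply: ln_ge0; rewrite ler1n muln_gt0.
  have L1 : 1 + 1 * L <= (1 + 1 * L) ^+ 8 by apply: ler_eXnr => //; lra.
  apply: (@le_trans _ _ (64 * (theta * p / 64 * n%:R) / (theta * n%:R))).
    rewrite ler_wpM2r ?invr_ge0 ?mulr_ge0 ?ltW //.
    by have := small1 n nN1; rewrite -/L; lra.
  by rewrite le_eqVlt; apply/orP; left; apply/eqP; field; rewrite !gt_eqF.
apply: (@le_trans _ _ (128 * (eps / 128 * n%:R) / n%:R)).
  by rewrite ler_pM2r ?invr_gt0 // ler_pM2l // small2.
by rewrite le_eqVlt; apply/orP; left; apply/eqP; field; rewrite gt_eqF.
Qed.

Lemma tau_threshold_bounds (R : realType) (theta q : R) n m : 0 < q ->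
  0 < 64 * ln (m%:R : R) / (theta * n%:R) <= 2 `^ (- q) ->
  1 <= 2 * tau_threshold theta q n m /\ tau_threshold theta q n m < 1.
Proof.
move=> q0 /andP[x0 x_le]; rewrite /tau_threshold; set x := _ / _.
have a0 : 0 < x `^ q^-1 by apply: powR_gt0.
suff : x `^ q^-1 <= 2^-1 by split; lra.
have <- : (2 `^ (- q)) `^ q^-1 = 2^-1 :> R.
  by rewrite -powRrM mulNr mulfV ?gt_eqF // powR_inv1 ?ler0n.
by apply: ge0_ler_powR; rewrite ?nnegrE ?invr_ge0 ?powR_ge0 // ltW.
Qed.

Lemma tau_threshold_gap (R : realType) (theta q : R) n m : 0 < q ->
  0 <= 64 * ln (m%:R : R) / (theta * n%:R) ->
  (1 - tau_threshold theta q n m) `^ q = 64 * ln (m%:R : R) / (theta * n%:R).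
Proof.
move=> q0 x0; rewrite /tau_threshold subKr -powRrM mulVf ?gt_eqF // powRr1 //.
Qed.

Lemma pattern_count_le (R : realType) (n k l : nat) (Q : R) :
  (0 < n)%N -> 0 <= Q -> (l <= 4)%N -> (k + l + 1 <= 8)%N ->
  (n ^ k * (2 * n) ^ l)%:R * (Q / n%:R) ^+ (k + l + 1) <= 16 * (1 + Q) ^+ 8 / n%:R.
Proof.
move=> n0 Q0 l4 kl8; have nR : 0 < n%:R :> R by rewrite ltr0n.
have -> : (n ^ k * (2 * n) ^ l)%:R * (Q / n%:R) ^+ (k + l + 1) = 2 ^+ l * Q ^+ (k + l + 1) / n%:R.
  rewrite natrM !natrX natrM expr_div_n exprMn !exprD expr1.
  by field; rewrite !expf_neq0 // gt_eqF.
rewrite ler_pM2r ?invr_gt0 // ler_pM ?exprn_ge0 //.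
  by rewrite (_ : 16 = 2 ^+ 4); [apply: ler_weXn2l; rewrite ?ler1n | rewrite -natrX].
apply: le_trans (ler_weXn2l _ kl8); last lra.
by rewrite lerXn2r ?nnegrE //; lra.
Qed.

Lemma measurable_gt (R : realType) (s : R) : measurable [set x : R | (s < x)%R].
Proof.
rewrite (_ : [set x | _] = `]s, +oo[%classic); first exact: measurable_itv.
by apply/seteqP; split=> x /=; rewrite in_itv /= andbT.
Qed.

Section HotGraph.
Variables (d : measure_display) (Omega : measurableType d) (R : realType).
Variables (P : probability Omega R) (n : nat) (X : 'I_n * 'I_(2 * n) -> {RV P >-> R}) (t Q : R).
Hypotheses (indep : mutually_independent X) (n_gt0 : (0 < n)%N) (Q_ge0 : 0 <= Q).
Hypothesis tail : forall c, (P [set w | (t < X c w)%R] <= (Q / n%:R)%:E)%E.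
Hypothesis bounded : forall c, P [set w | (1 < X c w)%R] = 0%E.

Lemma unlikely_dense_pattern k l (pat : 'I_k -> 'I_l -> bool) :
  #|[pred c : 'I_k * 'I_l | pat c.1 c.2]| = (k + l + 1)%N -> (l <= 4)%N -> (k + l + 1 <= 8)%N ->
  unlikely P (fun w => occurs pat (fun i j => t < X (i, j) w)) (16 * (1 + Q) ^+ 8 / n%:R).
Proof.
move=> size_pat l4 kl8.
have Qn_ge0 : 0 <= Q / n%:R by rewrite divr_ge0.
apply: unlikely_le (unlikely_occurs indep Qn_ge0 tail pat).
by rewrite !card_ord size_pat pattern_count_le.
Qed.

Lemma unlikely_dense_pattern_transpose k l (pat : 'I_k -> 'I_l -> bool) :
  #|[pred c : 'I_k * 'I_l | pat c.1 c.2]| = (k + l + 1)%N -> (k <= 4)%N -> (k + l + 1 <= 8)%N ->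
  unlikely P (fun w => occurs pat (fun j i => t < X (i, j) w)) (16 * (1 + Q) ^+ 8 / n%:R).
Proof.
move=> size_pat k4 kl8.
rewrite (boolp.funext (fun w => occurs_transpose pat (fun i j => t < X (i, j) w))).
apply: unlikely_dense_pattern; rewrite ?(addnC l) //.
by rewrite (card_rel (fun q p => pat p q)) exchange_big -card_rel.
Qed.

Lemma unlikely_not_dense_free :
  unlikely P (fun w => ~~ dense_free (fun i j => t < X (i, j) w) ||
                       ~~ dense_free (fun j i => t < X (i, j) w))
    (128 * (1 + Q) ^+ 8 / n%:R).
Proof.
have size_K23 : #|[pred c | complete_pat 2 3 c.1 c.2]| = (2 + 3 + 1)%N.
  by rewrite card_rel !big_ord_recr !big_ord0.
have size_K32 : #|[pred c | complete_pat 3 2 c.1 c.2]| = (3 + 2 + 1)%N.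
  by rewrite card_rel !big_ord_recr !big_ord0.
have size_fan : #|[pred c | fan_pat c.1 c.2]| = (3 + 3 + 1)%N.
  by rewrite card_rel !big_ord_recr !big_ord0.
have size_bowtie : #|[pred c | bowtie_pat c.1 c.2]| = (3 + 4 + 1)%N.
  by rewrite card_rel !big_ord_recr !big_ord0.
have rows := unlikely_orb (unlikely_dense_pattern size_K23 isT isT)
  (unlikely_orb (unlikely_dense_pattern size_K32 isT isT)
  (unlikely_orb (unlikely_dense_pattern size_fan isT isT)
                (unlikely_dense_pattern size_bowtie isT isT))).
have cols := unlikely_orb (unlikely_dense_pattern_transpose size_K23 isT isT)
  (unlikely_orb (unlikely_dense_pattern_transpose size_K32 isT isT)
  (unlikely_orb (unlikely_dense_pattern_transpose size_fan isT isT)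
                (unlikely_dense_pattern_transpose size_bowtie isT isT))).
apply: unlikely_eq (unlikely_le _ (unlikely_orb rows cols)) => [w|].
  by rewrite /dense_free !negb_and !negbK.
by rewrite le_eqVlt; apply/orP; left; apply/eqP; ring.
Qed.

Lemma dense_free_whp : exists A : set Omega,
  [/\ measurable A,
      A `<=` [set w | [&& [forall c, X c w <= 1], dense_free (fun i j => t < X (i, j) w)
                        & dense_free (fun j i => t < X (i, j) w)]]
    & ((1 - 128 * (1 + Q) ^+ 8 / n%:R)%:E <= P A)%E].
Proof.
pose bad w := [exists c, 1 < X c w] || (~~ dense_free (fun i j => t < X (i, j) w) ||
                                         ~~ dense_free (fun j i => t < X (i, j) w)).
have [mbad Pbad] : unlikely P bad (0 + 128 * (1 + Q) ^+ 8 / n%:R).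
  apply: unlikely_orb; last exact: unlikely_not_dense_free.
  rewrite -(mulr0 #|{: ('I_n * 'I_(2 * n))%type}|%:R); apply: unlikely_exists => c.
  by split; [exact: measurable_funPTI (measurable_gt _) | rewrite bounded].
have badC : [set w | ~~ bad w] = ~` [set w | bad w] by apply/seteqP; split=> w /= /negP.
exists [set w | ~~ bad w]; split; first by rewrite badC; exact: measurableC.
  move=> w /=; rewrite /bad !negb_or => /and3P[/existsPn bounded_w /negPn rows /negPn cols].
  by apply/and3P; split; [apply/forallP => c; rewrite leNgt bounded_w | exact rows | exact cols].
rewrite badC probability_setC // -(fineK (fin_num_measure P _ mbad)) -EFinB lee_fin.
by rewrite -(fineK (fin_num_measure P _ mbad)) lee_fin in Pbad; lra.
Qed.

End HotGraph.

Section Law.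
Variables (d : measure_display) (Omega : measurableType d) (R : realType).
Variables (P : probability Omega R) (U : probability R R) (Y : {RV P >-> R}).
Hypothesis Y_law : forall B, measurable B -> distribution P Y B = U B.

Lemma prob_gt_law (s : R) : P [set w | (s < Y w)%R] = U [set x | (s < x)%R].
Proof. by rewrite -[LHS]/(distribution P Y [set x | (s < x)%R]) Y_law //; exact: measurable_gt. Qed.

Lemma prob_gt1_eq0 : U [set x | 0 <= x <= 1] = 1%E -> P [set w | (1 < Y w)%R] = 0%E.
Proof.
move=> U01; rewrite prob_gt_law; apply/eqP; rewrite eq_le measure_ge0 andbT.
have m01 : measurable [set x : R | 0 <= x <= 1].
  rewrite (_ : [set x | _] = `[0, 1]%classic); first exact: measurable_itv.
  by apply/seteqP; split=> x /=; rewrite in_itv.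
apply: (@le_trans _ _ (U (~` [set x | 0 <= x <= 1]))).
  apply: le_measure; rewrite ?inE; [exact: measurable_gt| exact: measurableC|].
  by move=> x /= x1 /andP[_]; rewrite leNgt x1.
by rewrite probability_setC // U01 subee.
Qed.

Lemma prob_gt_tau_threshold (theta_lo theta_hi q : R) n m :
  poly_bounded_above U theta_hi q -> 0 < q ->
  0 < 64 * ln (m%:R : R) / (theta_lo * n%:R) <= 2 `^ (- q) ->
  (P [set w | (2 * tau_threshold theta_lo q n m - 1 < Y w)%R] <=
     (theta_hi * (2 `^ q * (64 * ln (m%:R : R) / (theta_lo * n%:R))))%:E)%E.
Proof.
move=> Uabove q0 gap; have [tau_half tau_lt1] := tau_threshold_bounds q0 gap.
have gap_ge0 := ltW (andP gap).1.
rewrite -(tau_threshold_gap q0 gap_ge0) -(powRM _ (ler0n _ 2)); last by rewrite subr_ge0 ltW.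
set tau := tau_threshold _ _ _ _ in tau_half tau_lt1 *.
rewrite (_ : 2 * tau - 1 = 1 - 2 * (1 - tau)); last by ring.
by rewrite prob_gt_law; apply: Uabove; apply/andP; split; lra.
Qed.

End Law.


Theorem proposition5 (R : realType) (U : probability R R) (theta_lo theta_hi q : R) :
  0 < theta_lo -> 0 < theta_hi -> 0 < q ->
  U [set x : R | 0 <= x <= 1] = 1%E ->
  poly_bounded_below U theta_lo q ->
  poly_bounded_above U theta_hi q ->
  forall eps : R, 0 < eps ->
  exists N : nat, forall n : nat, (N <= n)%N ->
  forall (d : measure_display) (Omega : measurableType d)
         (P : probability Omega R)
         (X : 'I_n * 'I_(2 * n) -> {RV P >-> R}),
    (forall k B, measurable B -> distribution P (X k) B = U B) ->
    mutually_independent X ->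
    exists A : set Omega,
      [/\ measurable A,
          A `<=` [set w | residual_max_degree_le 2
                   (tau_threshold theta_lo q n (2 * n))
                   (fun i j => X (i, j) w) 2]
        & ((1 - eps)%:E <= P A)%E].
Proof.
move=> theta_lo0 theta_hi0 q0 U01 _ Uabove eps eps0.
pose K := theta_hi * 2 `^ q * 64 / theta_lo.
have K0 : 0 <= K by rewrite /K divr_ge0 ?mulr_ge0 ?powR_ge0 ?ltW.
have [N HN] := threshold_eventually q theta_lo0 K0 eps0.
exists N => n nN d Omega P X X_law indep.
have [n0 gap_small err_small] := HN n nN.
set L := ln _ in gap_small err_small.
have L0 : 0 < L by apply: ln_gt0; rewrite ltr1n mul2n -addnn; exact: (leq_add n0 n0).
have gap0 : 0 < 64 * L / (theta_lo * n%:R) by rewrite divr_gt0 ?mulr_gt0 ?ltr0n.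
have gap : 0 < 64 * L / (theta_lo * n%:R) <= 2 `^ (- q) by rewrite gap0.
have [tau_half tau_lt1] := tau_threshold_bounds q0 gap.
have tail c : (P [set w | (2 * tau_threshold theta_lo q n (2 * n) - 1 < X c w)%R]
                 <= (K * L / n%:R)%:E)%E.
  apply: le_trans (prob_gt_tau_threshold (X_law c) Uabove q0 gap) _.
  by rewrite lee_fin le_eqVlt -/L /K; apply/orP; left; apply/eqP; field; rewrite !gt_eqF ?ltr0n.
have [A [mA A_dense_free PA]] := dense_free_whp indep n0 (mulr_ge0 K0 (ltW L0)) tail
  (fun c => prob_gt1_eq0 (X_law c) U01).
exists A; split=> // [w /A_dense_free /and3P[/forallP X_le1 rows cols]|].
  exact (residual_max_degree_le2 (fun i j => X_le1 (i, j)) tau_half tau_lt1 rows cols).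
by apply: le_trans PA; rewrite lee_fin; lra.
Qed.
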